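(* Let $\mathcal{S}\subset\mathbb{R}^n$ be compact convex with $\|x\|\le D$ for all $x\in\mathcal{S}$, and let $f_1,\dots,f_T:\mathcal{S}\to\mathbb{R}$ be differentiable and $\ell$-strongly convex with $\|\nabla f_t(x)\|\le G$ on $\mathcal{S}$. Let $\gamma\in(0,1)$, $\theta_1\in\mathcal{S}$ and $$\theta_{t+1}=\operatorname{argmin}_{\theta\in\mathcal{S}}\|\theta-(\theta_t-\eta_t\nabla f_t(\theta_t))\|^2,\qquad\eta_t=\frac{1-\gamma}{\ell(1-\gamma^t)}.$$ Then for all $z_1,\dots,z_T\in\mathcal{S}$ with $\sum_{t=2}^T\|z_t-z_{t-1}\|\le V$, $$\sum_{t=1}^T\big(f_t(\theta_t)-f_t(z_t)\big)\le\frac{2D\ell}{1-\gamma}V+\frac{G^2}{2}\sum_{t=1}^T\eta_t.$$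
   Context: $\ell$-strongly convex: $f(y)\ge f(x)+\nabla f(x)^\top(y-x)+\frac\ell2\|x-y\|^2$ for all $x,y\in\mathcal{S}$. *)

From HB Require Import structures.
From mathcomp Require Import all_boot all_order all_algebra.
From mathcomp Require Import all_classical all_reals all_analysis.
Set Implicit Arguments. Unset Strict Implicit. Unset Printing Implicit Defensive.
Import Order.TTheory GRing.Theory Num.Theory.
Import numFieldNormedType.Exports.
Local Open Scope classical_set_scope.
Local Open Scope ring_scope.

Definition dotv {R : realType} {n : nat} (u v : 'rV[R]_n) : R :=
  \sum_(i < n) u ord0 i * v ord0 i.

Definition enorm {R : realType} {n : nat} (u : 'rV[R]_n) : R :=
  Num.sqrt (dotv u u).

Definition grad {R : realType} {n : nat} (f : 'rV[R]_n -> R) (x : 'rV[R]_n)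
  : 'rV[R]_n := \row_(i < n) ('d f x (delta_mx ord0 i : 'rV[R]_n)).

Definition convex_set_rV {R : realType} {n : nat} (S : set 'rV[R]_n) : Prop :=
  forall x y (a : R), S x -> S y -> 0 <= a <= 1 -> S (a *: x + (1 - a) *: y).

Definition strongly_convex_on {R : realType} {n : nat} (l : R)
  (S : set 'rV[R]_n) (f : 'rV[R]_n -> R) : Prop :=
  forall x y, S x -> S y ->
    f x + dotv (grad f x) (y - x) + l / 2 * enorm (x - y) ^+ 2 <= f y.

Definition is_proj {R : realType} {n : nat} (S : set 'rV[R]_n)
  (w p : 'rV[R]_n) : Prop :=
  S p /\ forall y, S y -> enorm (p - w) ^+ 2 <= enorm (y - w) ^+ 2.

From HB Require Import structures.
From mathcomp Require Import all_boot all_order all_algebra.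
From mathcomp Require Import all_classical all_reals all_analysis.
From mathcomp Require Import ring lra.
Import Order.TTheory GRing.Theory Num.Theory.
Import numFieldNormedType.Exports.
Local Open Scope classical_set_scope.
Local Open Scope ring_scope.

(* With eta_t the step size and q_t = 1 / (2 eta_t), strong convexity and the expansion of
   |theta_t - eta_t g_t - z_t|^2 bound the regret of round t by
   (q_t - l/2) |theta_t - z_t|^2 - q_t |w_t - z_t|^2 + eta_t G^2 / 2, where w_t is the
   unprojected step.  Projecting w_t onto S does not increase its distance to z_t, and the
   choice of eta_t gives q_{t+1} - l/2 = gamma q_t <= q_t, so consecutive rounds cancel up to
   q_t (|theta_{t+1} - z_{t+1}|^2 - |theta_{t+1} - z_t|^2) <= q_t 4 D |z_{t+1} - z_t|, with
   q_t <= l / (2 (1 - gamma)). *)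

Section EuclideanSpace.
Context {R : realType} {n : nat}.
Implicit Types u v w : 'rV[R]_n.

Lemma dotvC u v : dotv u v = dotv v u.
Proof. by apply: eq_bigr => i _; rewrite mulrC. Qed.

Lemma dotvDl u v w : dotv (u + v) w = dotv u w + dotv v w.
Proof. by rewrite /dotv -big_split; apply: eq_bigr => i _; rewrite !mxE mulrDl. Qed.

Lemma dotvNl u w : dotv (- u) w = - dotv u w.
Proof. by rewrite /dotv -sumrN; apply: eq_bigr => i _; rewrite !mxE mulNr. Qed.

Lemma dotvZl (c : R) u w : dotv (c *: u) w = c * dotv u w.
Proof. by rewrite /dotv mulr_sumr; apply: eq_bigr => i _; rewrite !mxE mulrA. Qed.

Lemma dotvDr u v w : dotv w (u + v) = dotv w u + dotv w v.
Proof. by rewrite dotvC dotvDl !(dotvC w). Qed.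

Lemma dotvNr u w : dotv w (- u) = - dotv w u.
Proof. by rewrite dotvC dotvNl dotvC. Qed.

Lemma dotvZr (c : R) u w : dotv w (c *: u) = c * dotv w u.
Proof. by rewrite dotvC dotvZl dotvC. Qed.

Definition dotvE := (dotvDl, dotvDr, dotvNl, dotvNr, dotvZl, dotvZr).

Lemma dotvv_ge0 u : 0 <= dotv u u.
Proof. by apply: sumr_ge0 => i _; rewrite -expr2 sqr_ge0. Qed.

Lemma enorm_ge0 u : 0 <= enorm u.
Proof. exact: sqrtr_ge0. Qed.

Lemma enorm_sqr u : enorm u ^+ 2 = dotv u u.
Proof. by rewrite sqr_sqrtr // dotvv_ge0. Qed.

Lemma enormN u : enorm (- u) = enorm u.
Proof. by rewrite /enorm !dotvE opprK. Qed.

Lemma enorm_sqrD u v : enorm (u + v) ^+ 2 = enorm u ^+ 2 + 2 * dotv u v + enorm v ^+ 2.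
Proof. by rewrite !enorm_sqr !dotvE (dotvC v u); ring. Qed.

Lemma enorm_sqrZ (c : R) u : enorm (c *: u) ^+ 2 = c ^+ 2 * enorm u ^+ 2.
Proof. by rewrite !enorm_sqr !dotvE mulrA -expr2. Qed.

(* Lagrange's identity: twice the gap is the sum of the squares (u_i v_j - u_j v_i)^2. *)
Lemma dotv_sqr_le u v : dotv u v ^+ 2 <= dotv u u * dotv v v.
Proof.
pose a i := u ord0 i; pose b i := v ord0 i.
have gapE : 2 * (dotv u u * dotv v v - dotv u v ^+ 2) =
    \sum_i \sum_j (a i * b j - a j * b i) ^+ 2.
  have -> : dotv u u * dotv v v - dotv u v ^+ 2 =
      \sum_i \sum_j (a i * a i * (b j * b j) - a i * b i * (a j * b j)).
    rewrite /dotv expr2 !mulr_suml -sumrB; apply: eq_bigr => i _ /=.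
    by rewrite !mulr_sumr -sumrB.
  rewrite mulr2n mulrDl mul1r {2}exchange_big -big_split /=.
  by apply: eq_bigr => i _; rewrite -big_split; apply: eq_bigr => j _ /=; ring.
have : 0 <= 2 * (dotv u u * dotv v v - dotv u v ^+ 2).
  by rewrite gapE; do 2!apply: sumr_ge0 => ? _; exact: sqr_ge0.
by rewrite pmulr_rge0 // subr_ge0.
Qed.

Lemma dotv_le_enormM u v : dotv u v <= enorm u * enorm v.
Proof.
apply: le_trans (ler_norm _) _.
rewrite -sqrtr_sqr /enorm -sqrtrM ?dotvv_ge0 //.
by rewrite ler_sqrt ?dotv_sqr_le // mulr_ge0 ?dotvv_ge0.
Qed.

Lemma enorm_sqr_diff_le {D : R} {p z z' : 'rV[R]_n} :
  enorm p <= D -> enorm z <= D -> enorm z' <= D ->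
  enorm (p - z') ^+ 2 - enorm (p - z) ^+ 2 <= 4 * D * enorm (z' - z).
Proof.
move=> pD zD z'D; set d := z' - z.
have bound x : enorm x <= D -> dotv d x <= D * enorm d.
  move=> xD; rewrite mulrC; apply: le_trans (dotv_le_enormM d x) _.
  by rewrite ler_wpM2l ?enorm_ge0.
have := bound _ z'D; have := bound _ zD; have := bound (- p); rewrite enormN.
have -> : enorm (p - z') ^+ 2 - enorm (p - z) ^+ 2 =
    dotv d z' + dotv d z + 2 * dotv d (- p).
  by rewrite !enorm_sqr /d !dotvE (dotvC z' p) (dotvC z p) (dotvC z z'); ring.
move=> /(_ pD); lra.
Qed.

End EuclideanSpace.

Lemma affine_ge0_at0 (R : realFieldType) (b e : R) :
  (forall a, 0 < a <= 1 -> 0 <= b + a * e) -> 0 <= b.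
Proof.
move=> ge0_on; rewrite leNgt; apply/negP => b_lt0.
have den_gt0 : 0 < - b + 2 * `|e| by have := normr_ge0 e; lra.
pose a := - b / (- b + 2 * `|e|).
have a_gt0 : 0 < a by rewrite divr_gt0 // oppr_gt0.
have a_le1 : a <= 1 by rewrite ler_pdivrMr // mul1r; have := normr_ge0 e; lra.
have ae_le : a * `|e| <= - b / 2.
  rewrite /a mulrAC ler_pdivrMr //.
  have := sqr_ge0 b; nra.
have : 0 <= b + a * e by apply: ge0_on; rewrite a_gt0 a_le1.
have := ler_wpM2l (ltW a_gt0) (ler_norm e).
lra.
Qed.

Section Projection.
Context {R : realType} {n : nat} {S : set 'rV[R]_n}.
Hypothesis convexS : convex_set_rV S.

(* Compare p with the points p + a (z - p) of the segment [p, z] and let a tend to 0. *)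
Lemma is_proj_variational {w p z : 'rV[R]_n} :
  is_proj S w p -> S z -> 0 <= dotv (p - w) (z - p).
Proof.
move=> [Sp p_min] Sz.
suff ge0_on : forall a : R, 0 < a <= 1 ->
    0 <= 2 * dotv (p - w) (z - p) + a * enorm (z - p) ^+ 2.
  by rewrite -(pmulr_rge0 _ (ltr0n _ 2)); exact: affine_ge0_at0 ge0_on.
move=> a /andP[a_gt0 a_le1].
have := p_min _ (convexS _ _ a Sz Sp (introT andP (conj (ltW a_gt0) a_le1))).
have -> : a *: z + (1 - a) *: p - w = (p - w) + a *: (z - p).
  by apply/rowP => i; rewrite !mxE; ring.
rewrite (enorm_sqrD (p - w)) dotvZr enorm_sqrZ -subr_ge0.
set c := dotv (p - w) (z - p); set e := enorm (z - p) ^+ 2.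
have -> : enorm (p - w) ^+ 2 + 2 * (a * c) + a ^+ 2 * e - enorm (p - w) ^+ 2 =
    a * (2 * c + a * e) by ring.
by rewrite pmulr_rge0.
Qed.

Lemma is_proj_dist_le {w p z : 'rV[R]_n} : is_proj S w p -> S z ->
  enorm (p - z) ^+ 2 <= enorm (w - z) ^+ 2.
Proof.
move=> projp Sz; have := is_proj_variational projp Sz.
have -> : w - z = - (p - w) + - (z - p) by rewrite !opprB addrA subrK.
rewrite (enorm_sqrD (- (p - w))) dotvNl dotvNr opprK !enormN.
rewrite -[z - p]opprB enormN; have := sqr_ge0 (enorm (p - w)); lra.
Qed.

Lemma is_proj_tracking {D c c' : R} {w p z z' : 'rV[R]_n} :
  (forall x, S x -> enorm x <= D) -> is_proj S w p -> S z -> S z' -> 0 <= c' <= c ->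
  c' * enorm (p - z') ^+ 2 - c * enorm (w - z) ^+ 2 <= c * (4 * D * enorm (z' - z)).
Proof.
move=> SD projp Sz Sz' /andP[c'_ge0 c'_le].
have c_ge0 := le_trans c'_ge0 c'_le.
have dist_le := ler_wpM2l c_ge0 (is_proj_dist_le projp Sz).
have drift_le := ler_wpM2l c_ge0
  (enorm_sqr_diff_le (SD _ projp.1) (SD _ Sz) (SD _ Sz')).
have shrink_le := ler_wpM2r (sqr_ge0 (enorm (p - z'))) c'_le.
rewrite mulrBr in drift_le; lra.
Qed.

End Projection.

(* Expanding the square, (2 eta)^-1 (|x - z|^2 - |x - eta g - z|^2) = <g, x - z> - eta |g|^2 / 2,
   which replaces the linear term of strong convexity. *)
Lemma strongly_convex_step_bound {R : realType} {n : nat} {l eta G : R}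
    {S : set 'rV[R]_n} {f : 'rV[R]_n -> R} {x z : 'rV[R]_n} :
  strongly_convex_on l S f -> S x -> S z -> 0 < eta -> enorm (grad f x) <= G ->
  f x - f z <= ((2 * eta)^-1 - l / 2) * enorm (x - z) ^+ 2
               - (2 * eta)^-1 * enorm (x - eta *: grad f x - z) ^+ 2 + G ^+ 2 / 2 * eta.
Proof.
move=> convf Sx Sz eta_gt0 gradG; set g := grad f x.
have := convf _ _ Sx Sz; rewrite -/g.
have -> : x - eta *: g - z = (x - z) + - (eta *: g) by rewrite addrAC.
rewrite (enorm_sqrD (x - z)) enormN enorm_sqrZ dotvNr dotvZr.
rewrite (dotvC (x - z)) -[z - x]opprB dotvNr.
have gG : enorm g ^+ 2 <= G ^+ 2 by rewrite !expr2 ler_pM ?enorm_ge0.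
set X := dotv g (x - z); set A := enorm (x - z) ^+ 2; set g2 := enorm g ^+ 2.
have -> : ((2 * eta)^-1 - l / 2) * A - (2 * eta)^-1 * (A + 2 * - (eta * X) + eta ^+ 2 * g2)
    + G ^+ 2 / 2 * eta = X - l / 2 * A + eta / 2 * (G ^+ 2 - g2).
  by field; rewrite gt_eqF.
have : 0 <= eta / 2 * (G ^+ 2 - g2) by rewrite mulr_ge0 ?subr_ge0 // divr_ge0 ?ltW.
lra.
Qed.

Definition step_size {R : realType} (l gamma : R) (t : nat) : R :=
  (1 - gamma) / (l * (1 - gamma ^+ t)).

Section StepSize.
Context {R : realType} {l gamma : R}.
Hypotheses (l_gt0 : 0 < l) (gamma_gt0 : 0 < gamma) (gamma_lt1 : gamma < 1).
Local Notation step_size := (step_size l gamma).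

Lemma step_size_ge0 (t : nat) : 0 <= step_size t.
Proof.
apply: divr_ge0; first by rewrite subr_ge0 ltW.
by rewrite mulr_ge0 ?subr_ge0 ?exprn_ile1 // ltW.
Qed.

Lemma step_size_gt0 {t : nat} : (0 < t)%N -> 0 < step_size t.
Proof.
move=> t_gt0; rewrite divr_gt0 ?subr_gt0 ?mulr_gt0 //.
by rewrite subr_gt0 exprn_ilt1 ?ltW // -lt0n.
Qed.

Lemma inv_step_size {t : nat} : (0 < t)%N ->
  (2 * step_size t)^-1 = l * (1 - gamma ^+ t) / (2 * (1 - gamma)).
Proof.
move=> t_gt0; rewrite /step_size.
have gamma_t_lt1 : gamma ^+ t < 1 by rewrite exprn_ilt1 ?ltW // -lt0n.
by field; rewrite !gt_eqF ?subr_gt0.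
Qed.

Lemma inv_step_size1 : (2 * step_size 1)^-1 = l / 2.
Proof. by rewrite inv_step_size // expr1; field; rewrite gt_eqF ?subr_gt0. Qed.

Lemma inv_step_sizeS {t : nat} : (0 < t)%N ->
  (2 * step_size t.+1)^-1 - l / 2 = gamma * (2 * step_size t)^-1.
Proof.
by move=> t_gt0; rewrite !inv_step_size // exprS; field; rewrite gt_eqF ?subr_gt0.
Qed.

Lemma inv_step_size_le {t : nat} : (0 < t)%N -> (2 * step_size t)^-1 <= l / (2 * (1 - gamma)).
Proof.
move=> t_gt0; rewrite inv_step_size // ler_pM2r ?invr_gt0 ?mulr_gt0 ?subr_gt0 //.
by rewrite ger_pMr // lerBlDr lerDl exprn_ge0 ?ltW.
Qed.

Lemma proj_potential_drift_le {n : nat} {S : set 'rV[R]_n} {D : R} {t : nat}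
    {w p z z' : 'rV[R]_n} :
  convex_set_rV S -> (forall x, S x -> enorm x <= D) -> (0 < t)%N ->
  is_proj S w p -> S z -> S z' ->
  ((2 * step_size t.+1)^-1 - l / 2) * enorm (p - z') ^+ 2
    - (2 * step_size t)^-1 * enorm (w - z) ^+ 2
  <= 2 * D * l / (1 - gamma) * enorm (z' - z).
Proof.
move=> convS SD t_gt0 projp Sz Sz'; set q := (2 * step_size t)^-1.
have q_ge0 : 0 <= q by rewrite invr_ge0 mulr_ge0 ?step_size_ge0.
have D_ge0 : 0 <= D := le_trans (enorm_ge0 _) (SD _ Sz).
rewrite inv_step_sizeS //.
apply: le_trans (is_proj_tracking (c := q) convS SD projp Sz Sz' _) _.
  by rewrite mulr_ge0 ?(ltW gamma_gt0) //= ler_piMl // ltW.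
have -> : 2 * D * l / (1 - gamma) * enorm (z' - z) =
    l / (2 * (1 - gamma)) * (4 * D * enorm (z' - z)).
  by field; rewrite gt_eqF ?subr_gt0.
by rewrite ler_wpM2r ?mulr_ge0 ?enorm_ge0 ?inv_step_size_le.
Qed.

End StepSize.

Lemma telescope_le {R : numDomainType} (T : nat) (u v w : nat -> R) :
  u 1%N = 0 -> 0 <= v T -> (forall t, (1 <= t < T)%N -> u t.+1 - v t <= w t.+1) ->
  \sum_(1 <= t < T.+1) (u t - v t) <= \sum_(2 <= t < T.+1) w t.
Proof.
case: T => [|T] u1 vT_ge0 step; first by rewrite !big_geq.
have -> : \sum_(1 <= t < T.+2) (u t - v t) =
    \sum_(1 <= t < T.+1) (u t.+1 - v t) - v T.+1.
  rewrite sumrB big_nat_recl // [\sum_(1 <= t < T.+2) v t]big_nat_recr //=.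
  by rewrite u1 add0r opprD addrA -sumrB.
rewrite [\sum_(2 <= t < T.+2) w t]big_add1 /= lerBlDr.
by rewrite -[leLHS]addr0; apply: lerD => //; apply: ler_sum_nat.
Qed.

Theorem theorem3p6 (R : realType) (n T : nat) (S : set 'rV[R]_n)
  (D G l gamma V : R)
  (f : nat -> 'rV[R]_n -> R) (theta z : nat -> 'rV[R]_n) :
  compact S -> convex_set_rV S ->
  (forall x, S x -> enorm x <= D) ->
  0 < l ->
  (forall t, (1 <= t <= T)%N ->
     (forall x, S x -> differentiable (f t) x) /\
     strongly_convex_on l S (f t) /\
     (forall x, S x -> enorm (grad (f t) x) <= G)) ->
  0 < gamma < 1 ->
  S (theta 1%N) ->
  (forall t, (1 <= t < T)%N ->
     is_proj S (theta t - ((1 - gamma) / (l * (1 - gamma ^+ t))) *: grad (f t) (theta t))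
       (theta t.+1)) ->
  (forall t, (1 <= t <= T)%N -> S (z t)) ->
  \sum_(2 <= t < T.+1) enorm (z t - z t.-1) <= V ->
  \sum_(1 <= t < T.+1) (f t (theta t) - f t (z t)) <=
    (2 * D * l) / (1 - gamma) * V +
    G ^+ 2 / 2 * \sum_(1 <= t < T.+1) ((1 - gamma) / (l * (1 - gamma ^+ t))).
Proof.
move=> _ convS SD l_gt0 Hf /andP[gamma_gt0 gamma_lt1] S1 Hproj Sz HV.
pose eta := step_size l gamma; pose q t := (2 * eta t)^-1.
pose w t := theta t - eta t *: grad (f t) (theta t).
pose u t := (q t - l / 2) * enorm (theta t - z t) ^+ 2.
pose v t := q t * enorm (w t - z t) ^+ 2.
pose C := 2 * D * l / (1 - gamma).
have q_ge0 t : 0 <= q t by rewrite invr_ge0 mulr_ge0 ?step_size_ge0.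
have Stheta t : (1 <= t <= T)%N -> S (theta t).
  by case: t => [|[|t]] t_in //; case: (Hproj t.+1 t_in).
have round t : (1 <= t < T.+1)%N -> f t (theta t) - f t (z t) <=
    u t - v t + G ^+ 2 / 2 * eta t.
  move=> t_in; have [_ [convf gradG]] := Hf t t_in; have [t_gt0 _] := andP t_in.
  exact: strongly_convex_step_bound convf (Stheta t t_in) (Sz t t_in)
    (step_size_gt0 l_gt0 gamma_gt0 gamma_lt1 t_gt0) (gradG _ (Stheta t t_in)).
have drift t : (1 <= t < T)%N -> u t.+1 - v t <= C * enorm (z t.+1 - z t).
  move=> t_in; have [t_gt0 t_lt] := andP t_in.
  have t_le : (1 <= t <= T)%N by rewrite t_gt0 ltnW.
  have := proj_potential_drift_le l_gt0 gamma_gt0 gamma_lt1 convS SD t_gt0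
    (Hproj t t_in) (Sz t t_le) (Sz t.+1 t_lt).
  exact.
apply: le_trans (ler_sum_nat round) _.
rewrite big_split /= -mulr_sumr lerD2r.
apply: le_trans (telescope_le T u v (fun t => C * enorm (z t - z t.-1)) _ _ drift) _.
- by rewrite /u /q /eta inv_step_size1 // subrr mul0r.
- by rewrite mulr_ge0 ?q_ge0 ?sqr_ge0.
- rewrite /= -mulr_sumr; apply: ler_wpM2l HV.
  by rewrite divr_ge0 ?subr_ge0 ?mulr_ge0 ?(le_trans (enorm_ge0 _) (SD _ S1)) // ltW.
Qed.
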